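(* In the adaptive clinching auction for one infinitely divisible good (described in the context), the allocations in the stopping step (I) can be carried out in such a way that, when the auction stops, there is at most one bidder $i$ with final allocation $X_i>0$ and total payment $P_i<B_i$.
   Context: One unit of an infinitely divisible good is sold to $n$ bidders; bidder $i$ reports valuation $v_i$ per unit and budget $B_i>0$; $X_i$ and $P_i$ denote the final allocation and total payment of bidder $i$. The adaptive clinching auction is a process indexed by time $t\ge0$, with price $p(t)$, effective budgets $b_i(t)$, allocations $x_i(t)$, payments $P_i(t)$, and supply $S(t)=1-\sum_ix_i(t)$; initially $p(0)=0$, $x_i(0)=P_i(0)=0$, $b_i(0)=B_i$, $S(0)=1$. Demand $D_i(t)=b_i(t)/p(t)$ and $D_{-i}(t)=\sum_{j\ne i}D_j(t)$. Active set $A(t)=\{j:v_j>p(t),b_j(t)>0\}$, exiting set $E(t)=\{j:v_j=p(t),b_j(t)>0\}$, clinching set $C(t)=\{j\in A(t):S(t)=D_{-j}(t)\}$. With a fixed report-independent ordering of the bidders, the rules (primes are time derivatives; unmentioned quantities are constant) are: (I) if $\sum_{i\in A(t)}D_i(t)\le S(t)$, stop at time $f=t$ and, at unit price $p(t)$ respecting budgets, give each $i\in A(t)$ amount $D_i(t)$ and give the remaining amount $S(t)-\sum_{i\in A(t)}D_i(t)$ to bidders in $E(t)$ (how this remainder is split among $E(t)$ is not otherwise specified); (II) else if $E(t)=\emptyset\ne A(t)$: $p'=1$, and for $i\in C(t)$: $b_i'=-S(t)$, $P_i'=S(t)$, $x_i'=S(t)/p(t)$; (III) else if $E(t)\ne\emptyset\ne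 A(t)$: $p'=0$; for the smallest-index $j\in E(t)$: $b_j'=-1$, $P_j'=x_j'=0$; for $i\in C(t)$: $b_i'=-1$, $P_i'=1$, $x_i'=1/p(t)$. *)

From HB Require Import structures.
From mathcomp Require Import all_boot all_order all_algebra.
From mathcomp Require Import all_classical all_reals all_analysis.
Set Implicit Arguments. Unset Strict Implicit. Unset Printing Implicit Defensive.
Import Order.TTheory GRing.Theory Num.Theory.
Import numFieldNormedType.Exports.
Local Open Scope ring_scope.
Local Open Scope classical_set_scope.

(* Adaptive clinching auction, one unit of a divisible good, bidders 'I_n
   (the report-independent ordering is the order of 'I_n).
   v i = valuation, B i = budget.  A run is given by the price p(t),
   effective budgets b i t, allocations x i t, payments P i t, and the
   stopping time f. *)

Definition has_rderiv (R : realType) (g : R -> R) (t d : R) : Prop :=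
  (fun h : R => (g (t + h) - g t) / h) @ at_right 0 --> d.

Definition supply (R : realType) (n : nat) (x : 'I_n -> R -> R) (t : R) : R :=
  1 - \sum_(i < n) x i t.

Definition demand (R : realType) (n : nat) (p : R -> R) (b : 'I_n -> R -> R)
  (t : R) (i : 'I_n) : R := b i t / p t.

Definition demand_others (R : realType) (n : nat) (p : R -> R)
  (b : 'I_n -> R -> R) (t : R) (i : 'I_n) : R :=
  \sum_(j < n | j != i) demand p b t j.

Definition active (R : realType) (n : nat) (v : 'I_n -> R) (p : R -> R)
  (b : 'I_n -> R -> R) (t : R) (i : 'I_n) : bool :=
  (p t < v i) && (0 < b i t).

Definition exiting (R : realType) (n : nat) (v : 'I_n -> R) (p : R -> R)
  (b : 'I_n -> R -> R) (t : R) (i : 'I_n) : bool :=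
  (v i == p t) && (0 < b i t).

Definition first_exiting (R : realType) (n : nat) (v : 'I_n -> R) (p : R -> R)
  (b : 'I_n -> R -> R) (t : R) (j : 'I_n) : bool :=
  exiting v p b t j && [forall k : 'I_n, exiting v p b t k ==> (j <= k)%N].

(* clinching set C(t); at price 0 the demands of the others are infinite
   (or undefined), so nobody clinches *)
Definition clinching (R : realType) (n : nat) (v : 'I_n -> R) (p : R -> R)
  (b x : 'I_n -> R -> R) (t : R) (i : 'I_n) : bool :=
  [&& active v p b t i, 0 < p t & supply x t == demand_others p b t i].

(* stopping condition of rule (I): sum_{i in A(t)} D_i(t) <= S(t);
   when p(t) = 0 every active demand is +infinity, so the condition holds
   only if A(t) is empty *)
Definition stop_cond (R : realType) (n : nat) (v : 'I_n -> R) (p : R -> R)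
  (b x : 'I_n -> R -> R) (t : R) : bool :=
  [forall i : 'I_n, ~~ active v p b t i] ||
  ((0 < p t) && (\sum_(i < n | active v p b t i) demand p b t i <= supply x t)).

Definition rule_rates (R : realType) (n : nat) (v : 'I_n -> R) (p : R -> R)
  (b x P : 'I_n -> R -> R) (t : R) : Prop :=
  let S := supply x t in
  if [exists j : 'I_n, exiting v p b t j] then
    has_rderiv p t 0 /\
    forall i : 'I_n,
      if clinching v p b x t i then
        [/\ has_rderiv (b i) t (-1), has_rderiv (P i) t 1
          & has_rderiv (x i) t (1 / p t)]
      else
        [/\ has_rderiv (b i) t (if first_exiting v p b t i then -1 else 0),
            has_rderiv (P i) t 0 & has_rderiv (x i) t 0]
  else
    has_rderiv p t 1 /\
    forall i : 'I_n,
      if clinching v p b x t i then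
        [/\ has_rderiv (b i) t (- S), has_rderiv (P i) t S
          & has_rderiv (x i) t (S / p t)]
      else
        [/\ has_rderiv (b i) t 0, has_rderiv (P i) t 0
          & has_rderiv (x i) t 0].

Definition auction_run (R : realType) (n : nat) (v B : 'I_n -> R)
  (p : R -> R) (b x P : 'I_n -> R -> R) (f : R) : Prop :=
  [/\ 0 <= f,
      p 0 = 0 /\ (forall i, [/\ x i 0 = 0, P i 0 = 0 & b i 0 = B i]),
      {within `[0, f], continuous p} /\
      (forall i, [/\ {within `[0, f], continuous (b i)},
                     {within `[0, f], continuous (x i)}
                   & {within `[0, f], continuous (P i)}]),
      (forall t, 0 <= t < f -> ~~ stop_cond v p b x t /\ rule_rates v p b x P t)
    &
      stop_cond v p b x f].

(* a way of carrying out the allocation of rule (I) at time f: r i is the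
   share of the remainder given to bidder i, at unit price p f,
   within the (effective) budget *)
Definition final_split (R : realType) (n : nat) (v : 'I_n -> R) (p : R -> R)
  (b x : 'I_n -> R -> R) (f : R) (r : 'I_n -> R) : Prop :=
  [/\ forall i, 0 <= r i,
      forall i, ~~ exiting v p b f i -> r i = 0,
      forall i, p f * r i <= b i f
    & \sum_(i < n) r i =
        supply x f - \sum_(i < n | active v p b f i) demand p b f i].

Definition final_alloc (R : realType) (n : nat) (v : 'I_n -> R) (p : R -> R)
  (b x : 'I_n -> R -> R) (f : R) (r : 'I_n -> R) (i : 'I_n) : R :=
  x i f + (if active v p b f i then demand p b f i else 0) + r i.

Definition final_pay (R : realType) (n : nat) (v : 'I_n -> R) (p : R -> R)
  (b P : 'I_n -> R -> R) (f : R) (r : 'I_n -> R) (i : 'I_n) : R :=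
  P i f + p f * ((if active v p b f i then demand p b f i else 0) + r i).

From HB Require Import structures.
From mathcomp Require Import all_boot all_order all_algebra.
From mathcomp Require Import all_classical all_reals all_analysis.
From mathcomp Require Import ring lra.
Import Order.TTheory GRing.Theory Num.Theory.
Import numFieldNormedType.Exports.
Set Implicit Arguments. Unset Strict Implicit. Unset Printing Implicit Defensive.
Local Open Scope ring_scope.
Local Open Scope classical_set_scope.

(* Along the run, budgets, supply and the slack [p t * S t - sum_(j != i) b j t]
   stay nonnegative: each has a nonnegative right derivative whenever it is
   negative.  Hence a bidder who has clinched something keeps the demands of
   the others within the supply, so it stays active before [f] and never
   exits, and its budget plus payment stays [B i].  Budget disappears without
   payment only from the first exiting bidder, so at most one bidder exiting
   at [f] has [b i f + P i f < B i], and none if some exiting bidder holds an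
   allocation.  The remainder of rule (I) goes to the bidders exiting at [f]:
   either all but one distinguished bidder [d] receive their full demand, or
   [d] receives nothing and the others are filled greedily, leaving at most one
   partially filled.  A bidder other than [d] left empty holds nothing and one
   filled to its demand has spent its budget, so only [d] or the partially
   filled bidder can end with a positive allocation and unspent budget. *)

Section RightDerivative.
Variable R : realType.
Implicit Types (g h : R -> R) (a c s t d k : R).

Lemma has_rderiv_cst k t : has_rderiv (fun=> k) t 0.
Proof. by rewrite /has_rderiv; under eq_fun do rewrite subrr mul0r; exact: cvg_cst. Qed.

Lemma has_rderivN g t d : has_rderiv g t d -> has_rderiv (fun s => - g s) t (- d).
Proof.
by move=> /cvgN; apply: cvg_trans; apply: near_eq_cvg; near=> h; rewrite -opprD mulNr.
Unshelve. all: by end_near. Qed.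

Lemma has_rderivD g h t d d' : has_rderiv g t d -> has_rderiv h t d' ->
  has_rderiv (fun s => g s + h s) t (d + d').
Proof.
move=> /cvgD /[apply]; apply: cvg_trans; apply: near_eq_cvg; near=> u.
by rewrite !fctE -mulrDl addrACA opprD.
Unshelve. all: by end_near. Qed.

Lemma has_rderivB g h t d d' : has_rderiv g t d -> has_rderiv h t d' ->
  has_rderiv (fun s => g s - h s) t (d - d').
Proof. by move=> ? /has_rderivN; exact: has_rderivD. Qed.

Lemma has_rderiv_sum (I : Type) (r : seq I) (Q : pred I) (F : I -> R -> R)
    (dF : I -> R) t :
  (forall i, Q i -> has_rderiv (F i) t (dF i)) ->
  has_rderiv (fun s => \sum_(i <- r | Q i) F i s) t (\sum_(i <- r | Q i) dF i).
Proof.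
move=> HF; elim: r => [|i r IHr].
  by under eq_fun do rewrite big_nil; rewrite big_nil; exact: has_rderiv_cst.
under eq_fun do rewrite big_cons; rewrite big_cons.
by case: ifP => Qi //; exact: has_rderivD (HF i Qi) IHr.
Qed.

(* The product rule only needs right continuity of [h], which the quotient
   [h (t + u) = h t + u * ((h (t + u) - h t) / u)] provides. *)
Lemma has_rderivM g h t d d' : has_rderiv g t d -> has_rderiv h t d' ->
  has_rderiv (fun s => g s * h s) t (d * h t + g t * d').
Proof.
rewrite /has_rderiv => dg dh.
have hr : (fun u => h t + u * ((h (t + u) - h t) / u)) @ 0^'+ --> h t + 0 * d'.
  by apply: cvgD; [exact: cvg_cst | apply: cvgM => //; exact: cvg_within].
rewrite mul0r addr0 in hr.
have gt : (fun _ : R => g t) @ 0^'+ --> g t by exact: cvg_cst.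
apply: (cvg_trans _ (cvgD (cvgM dg hr) (cvgM gt dh))); apply: near_eq_cvg; near=> u.
have u0 : u != 0 by apply: lt0r_neq0; near: u; exact: nbhs_right_gt.
by rewrite !fctE /GRing.mul_fun /=; field.
Unshelve. all: by end_near. Qed.

Lemma has_rderiv_lb g t d : has_rderiv g t d -> forall e, 0 < e ->
  exists2 del, 0 < del & forall u, 0 < u < del -> (d - e) * u < g (t + u) - g t.
Proof.
move=> dg e e0.
have : \forall u \near 0^'+, d - e < (g (t + u) - g t) / u.
  by apply: cvgr_gt dg _ _; rewrite ltrBlDr ltrDl.
rewrite near_withinE => /nbhs_ballP [del del0 Hdel].
exists del => // u /andP [u0 udel]; rewrite -ltr_pdivlMr //.
by apply: Hdel => //=; rewrite /ball /= sub0r normrN gtr0_norm.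
Qed.

Lemma within_continuousD (A : set R) g h :
  {within A, continuous g} -> {within A, continuous h} ->
  {within A, continuous (fun t => g t + h t)}.
Proof. by move=> gc hc y; exact: continuousD (gc y) (hc y). Qed.

Lemma within_continuousB (A : set R) g h :
  {within A, continuous g} -> {within A, continuous h} ->
  {within A, continuous (fun t => g t - h t)}.
Proof. by move=> gc hc y; exact: continuousB (gc y) (hc y). Qed.

Lemma within_continuousM (A : set R) g h :
  {within A, continuous g} -> {within A, continuous h} ->
  {within A, continuous (fun t => g t * h t)}.
Proof. by move=> gc hc y; exact: continuousM (gc y) (hc y). Qed.

Lemma within_continuous_sum (A : set R) (I : Type) (r : seq I) (Q : pred I)
    (F : I -> R -> R) :
  (forall i, Q i -> {within A, continuous (F i)}) ->
  {within A, continuous (fun t => \sum_(i <- r | Q i) F i t)}.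
Proof. by move=> Fc; apply: continuous_big => //; exact: add_continuous. Qed.

Lemma within_continuous_subitv g a c a' c' : a <= a' -> c' <= c ->
  {within `[a, c], continuous g} -> {within `[a', c'], continuous g}.
Proof.
move=> aa' c'c; apply: continuous_subspaceW => y /=; rewrite !in_itv /=.
by move=> /andP [a'y yc']; rewrite (le_trans aa' a'y) (le_trans yc' c'c).
Qed.

Lemma continuous_within_gt0 g a c s : {within `[a, c], continuous g} ->
  a <= s <= c -> 0 < g s ->
  exists2 e, 0 < e & forall y, a <= y <= c -> `|s - y| < e -> 0 < g y.
Proof.
move=> /subspace_continuousP gc sac gs0.
have : \forall y \near within `[a, c] (nbhs s), 0 < g y.
  by apply: cvgr_gt gs0; apply: gc; rewrite /= in_itv.
rewrite near_withinE => /nbhs_ballP [e e0 He].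
by exists e => // y yac sy; apply: He => //=; rewrite in_itv.
Qed.

Lemma near_within_left (Q : R -> Prop) a c : a < c ->
  (\forall y \near within `[a, c] (nbhs c), Q y) -> exists2 y, a <= y < c & Q y.
Proof.
move=> ac; rewrite near_withinE => /nbhs_ballP [e /= e0 Qe].
pose y := Num.max a (c - e / 2).
have ay : a <= y by rewrite le_max lexx.
have yc : y < c by rewrite gt_max ac /=; lra.
have cey : c - e / 2 <= y by rewrite le_max lexx orbT.
exists y; first by rewrite ay yc.
apply: Qe; last by rewrite /= in_itv /= ay ltW.
by rewrite /ball /= gtr0_norm ?subr_gt0 //; lra.
Qed.

Lemma real_induction (Q : R -> Prop) a c : a <= c ->
  (forall s, a <= s <= c -> (forall u, a <= u < s -> Q u) -> Q s) ->
  (forall s, a <= s < c -> Q s ->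
    exists2 e, 0 < e & forall u, s < u < s + e -> u <= c -> Q u) ->
  Q c.
Proof.
move=> ac Qleft Qright.
pose T := [set t | a <= t <= c /\ forall u, a <= u <= t -> Q u].
have Ta : T a.
  split; first by rewrite lexx ac.
  move=> u /andP [au ua]; rewrite (@le_anti _ _ u a) ?au ?ua //.
  apply: Qleft => [|v /andP [av va]]; first by rewrite lexx ac.
  by move: (le_lt_trans av va); rewrite ltxx.
have Tsup : has_sup T by split; [exists a | exists c => t [/andP []]].
pose s := sup T.
have as_ : a <= s by exact: sup_upper_bound.
have sc : s <= c by apply: ge_sup => [|t [/andP []]]; [exists a|].
have Qbelow u : a <= u < s -> Q u.
  move=> /andP [au us].
  have [t [_ Qt] ut] := sup_adherent (ltac:(by rewrite subr_gt0) : 0 < s - u) Tsup.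
  by apply: Qt; rewrite au /= ltW //; move: ut; rewrite opprB addrC subrK.
have Qs : Q s by apply: Qleft => //; rewrite as_ sc.
have [sc'|] := ltP s c; last by move=> cs; rewrite (@le_anti _ _ c s) ?cs ?sc.
have [e e0 Qe] := Qright s (ltac:(by rewrite as_ sc')) Qs.
pose t := Num.min (s + e / 2) c.
have st : s < t by rewrite lt_min sc' andbT; lra.
have tse : t <= s + e / 2 by rewrite ge_min lexx.
have tc : t <= c by rewrite ge_min lexx orbT.
have Tt : T t.
  split; first by rewrite (le_trans as_ (ltW st)) tc.
  move=> u /andP [au ut]; have [us|su] := ltP u s; first by apply: Qbelow; rewrite au us.
  have [->|us] := eqVneq u s; first exact: Qs.
  apply: Qe; last exact: le_trans ut tc.
  have su' : s < u by rewrite lt_neqAle eq_sym us su.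
  by rewrite su' /=; lra.
by move: st; rewrite ltNge (sup_upper_bound Tsup Tt).
Qed.

(* Real induction shows that [g] stays above the decreasing barrier
   [- k * (t - a + 1)], for every [k > 0]. *)
Lemma rderiv_barrier_ge0 g a c : a <= c -> {within `[a, c], continuous g} ->
  0 <= g a ->
  (forall t, a <= t < c -> g t < 0 -> exists2 d, 0 <= d & has_rderiv g t d) ->
  0 <= g c.
Proof.
move=> ac gc ga gd; apply/ler_addgt0Pr => e e0.
pose k := e / (c - a + 1).
have k0 : 0 < k by rewrite divr_gt0 //; lra.
pose h t := g t + k * (t - a + 1).
have ca : c - a + 1 != 0 by apply: lt0r_neq0; lra.
have -> : g c + e = h c by rewrite /h /k divfK.
have hc : {within `[a, c], continuous h}.
  have aff : {within `[a, c], continuous (fun t => k * (t - a + 1))}.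
    apply: continuous_subspaceT => z; apply: cvgM; first exact: cvg_cst.
    by apply: cvgD; [apply: cvgB; [exact: cvg_id | exact: cvg_cst] | exact: cvg_cst].
  exact: within_continuousD.
apply: (@real_induction (fun t => 0 <= h t) a c ac) => [s sac hleft|s sac hs].
- rewrite leNgt; apply/negP => hs.
  have [del del0 hneg] := @continuous_within_gt0 (fun t => - h t) a c s
    (fun y => continuousN (hc y)) sac (ltac:(by rewrite oppr_gt0)).
  have [as_ sc] := andP sac.
  have {}as_ : a < s.
    rewrite lt_neqAle as_ andbT; apply/eqP => sa; move: hs; rewrite -sa /h.
    by apply/negP; rewrite -leNgt; apply: addr_ge0 => //; apply: mulr_ge0; lra.
  pose y := Num.max a (s - del / 2).
  have ay : a <= y by rewrite le_max lexx.
  have ys : y < s by rewrite gt_max as_ /=; lra.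
  have sdy : s - del / 2 <= y by rewrite le_max lexx orbT.
  have := hneg y (ltac:(by rewrite ay (le_trans (ltW ys) sc))).
  rewrite gtr0_norm ?subr_gt0 // => /(_ ltac:(lra)).
  by rewrite oppr_gt0 ltNge hleft // ay ys.
- have [as_ sc] := andP sac.
  have [gs|gs] := ltP (g s) 0; last first.
    have h_pos : 0 < h s by rewrite /h; apply: ltr_wpDl => //; apply: mulr_gt0; lra.
    have [del del0 hpos] := @continuous_within_gt0 h a c s hc
      (ltac:(by rewrite as_ ltW)) h_pos.
    exists del => // u /andP [su usd] uc; apply: ltW; apply: hpos.
      by rewrite (le_trans as_ (ltW su)) uc.
    by rewrite distrC gtr0_norm ?subr_gt0 //; lra.
  have [d d0 dg] := gd s sac gs.
  have [del del0 Hlb] := has_rderiv_lb dg k0.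
  exists del => // u /andP [su usd] _.
  have := Hlb (u - s) (ltac:(by rewrite subr_gt0 su /=; lra)).
  rewrite (addrC s) subrK => lb.
  have : 0 <= d * (u - s) by apply: mulr_ge0; lra.
  by move: hs; rewrite /h; nra.
Qed.

Lemma rderiv_ge0_le g a c : a <= c -> {within `[a, c], continuous g} ->
  (forall t, a <= t < c -> exists2 d, 0 <= d & has_rderiv g t d) -> g a <= g c.
Proof.
move=> ac gc gd; rewrite -subr_ge0.
apply: (@rderiv_barrier_ge0 (fun t => g t - g a) a c) => //.
- by apply: (within_continuousB gc) => y; exact: cvg_cst.
- by rewrite subrr.
move=> t tac _; have [d d0 dg] := gd t tac; exists d => //.
by rewrite -[d]subr0; apply: has_rderivB dg (has_rderiv_cst _ _).
Qed.

Lemma rderiv0_eq g a c : a <= c -> {within `[a, c], continuous g} ->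
  (forall t, a <= t < c -> has_rderiv g t 0) -> g c = g a.
Proof.
move=> ac gc g0; apply/le_anti/andP; split; last first.
  by apply: rderiv_ge0_le => // t /g0; exists 0.
rewrite -lerN2; apply: (@rderiv_ge0_le (fun t => - g t) a c) => //.
  by move=> y; exact: continuousN (gc y).
by move=> t /g0 /has_rderivN; rewrite oppr0; exists 0.
Qed.

End RightDerivative.

Section Filling.
Variables (R : realDomainType) (n : nat) (c : 'I_n -> R).
Hypothesis c_ge0 : forall j, 0 <= c j.

Definition filling (Q : pred 'I_n) (r : 'I_n -> R) (R0 : R) :=
  [/\ forall j, 0 <= r j <= c j, forall j, ~~ Q j -> r j = 0
    & \sum_(j < n) r j = R0].

Lemma filling_sub (Q Q' : pred 'I_n) r R0 : (forall j, Q' j -> Q j) ->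
  filling Q' r R0 -> filling Q r R0.
Proof.
move=> Q'Q [r_bd r_out r_sum]; split=> // j nQj.
by apply: r_out; apply: contra nQj; exact: Q'Q.
Qed.

Lemma filling_all_but (Q : pred 'I_n) d R0 :
  \sum_(j < n | Q j && (j != d)) c j <= R0 <= \sum_(j < n | Q j) c j ->
  exists2 r, filling Q r R0 & forall j, Q j -> j != d -> r j = c j.
Proof.
move=> /andP [lo hi]; have [Qd|nQd] := boolP (Q d); last first.
  have sumQ : \sum_(j < n | Q j && (j != d)) c j = \sum_(j < n | Q j) c j.
    by apply: eq_bigl => j; case: eqVneq => [->|]; rewrite ?(negbTE nQd) ?andbT.
  exists (fun j => if Q j then c j else 0) => [|j -> //].
  split=> [j|j /negbTE ->|] //; first by case: ifP; rewrite lexx c_ge0.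
  by rewrite -big_mkcond; apply/le_anti; rewrite hi andbT -sumQ lo.
pose rest := R0 - \sum_(j < n | Q j && (j != d)) c j.
exists (fun j => if j == d then rest else if Q j then c j else 0); last first.
  by move=> j Qj /negbTE ->; rewrite Qj.
split.
- move=> j; case: eqP => [->|_]; last by case: ifP; rewrite lexx c_ge0.
  rewrite subr_ge0 lo lerBlDr /=.
  by rewrite (bigD1 d) //= addrC in hi.
- by move=> j Qj; case: eqP => [jd|_]; [move: Qj; rewrite jd Qd | rewrite (negbTE Qj)].
have sum_rest : \sum_(j < n | j != d) (if j == d then rest else if Q j then c j else 0)
    = \sum_(j < n | Q j && (j != d)) c j.
  rewrite [RHS](eq_bigl (fun j => (j != d) && Q j)) => [|j]; last by rewrite andbC.
  by rewrite big_mkcondr; apply: eq_bigr => j /negbTE ->.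
by rewrite (bigD1 d) //= eqxx sum_rest subrK.
Qed.

Lemma filling_greedy (Q : pred 'I_n) R0 : 0 <= R0 <= \sum_(j < n | Q j) c j ->
  exists2 r, filling Q r R0 & forall j k, 0 < r j < c j -> 0 < r k < c k -> j = k.
Proof.
have [m] := ubnP #|Q|; elim: m Q R0 => // m IHm Q R0 cardQ /andP [R0_ge0 R0_le].
case: (pickP Q) => [q Qq|Q0]; last first.
  have R00 : R0 = 0 by apply/le_anti; rewrite R0_ge0 andbT (le_trans R0_le) ?big_pred0.
  exists (fun=> 0) => [|j k]; last by rewrite ltxx.
  by split=> [j||]; rewrite ?lexx ?c_ge0 ?big1 ?R00.
pose Q' := [pred j | Q j && (j != q)].
have [le|lt] := leP R0 (\sum_(j < n | Q' j) c j).
  have cardQ' : (#|Q'| < m)%N.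
    rewrite (cardD1 q) [q \in Q]Qq add1n ltnS in cardQ; apply: leq_ltn_trans cardQ.
    by apply: subset_leq_card; apply/fintype.subsetP => j; rewrite !inE andbC.
  have [r rQ' r_part] := IHm Q' R0 cardQ' (ltac:(by rewrite R0_ge0 le)).
  by exists r => //; apply: filling_sub rQ' => j /andP [].
have [r rQ r_full] := @filling_all_but Q q R0 (ltac:(by rewrite R0_le andbT; exact: ltW)).
exists r => // j k; case: rQ => _ r_out _.
have part_q i : 0 < r i < c i -> i = q.
  have [Qi|/r_out ->] := boolP (Q i); last by rewrite ltxx.
  by have [//|iq] := eqVneq i q; rewrite r_full // ltxx andbF.
by move=> /part_q -> /part_q ->.
Qed.

End Filling.

Definition unsaturated (R : realType) (n : nat) (v B : 'I_n -> R) (p : R -> R)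
  (b x P : 'I_n -> R -> R) (f : R) (r : 'I_n -> R) (i : 'I_n) : Prop :=
  0 < final_alloc v p b x f r i /\ final_pay v p b P f r i < B i.

Section AuctionRun.
Variables (R : realType) (n : nat) (v B : 'I_n -> R) (p : R -> R)
  (b x P : 'I_n -> R -> R) (f : R).
Hypothesis v_ge0 : forall i, 0 <= v i.
Hypothesis B_gt0 : forall i, 0 < B i.
Hypothesis run : auction_run v B p b x P f.

Local Notation S := (supply x).
Local Notation act := (active v p b).
Local Notation ex := (exiting v p b).
Local Notation cl := (clinching v p b x).
Local Notation fe := (first_exiting v p b).

Let rule3 t := [exists j, ex t j].
Let dp t : R := if rule3 t then 0 else 1.
Let dP t i : R := if cl t i then (if rule3 t then 1 else S t) else 0.
Let db t i : R := if [&& ~~ cl t i, rule3 t & fe t i] then -1 else - dP t i.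
Let dx t i : R := dP t i / p t.

Lemma run_f_ge0 : 0 <= f. Proof. by case: run. Qed.

Lemma run_init i : [/\ x i 0 = 0, P i 0 = 0 & b i 0 = B i].
Proof. by case: run => _ [_ /(_ i)]. Qed.

Lemma run_continuous i : [/\ {within `[0, f], continuous (b i)},
  {within `[0, f], continuous (x i)} & {within `[0, f], continuous (P i)}].
Proof. by case: run => _ _ [_ /(_ i)]. Qed.

Lemma run_continuous_price : {within `[0, f], continuous p}.
Proof. by case: run => _ _ []. Qed.

Lemma run_not_stopped t : 0 <= t < f -> ~~ stop_cond v p b x t.
Proof. by move=> tf; case: run => _ _ _ /(_ t tf) []. Qed.

Lemma run_rates t : 0 <= t < f ->
  has_rderiv p t (dp t) /\ forall i, [/\ has_rderiv (b i) t (db t i),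
    has_rderiv (P i) t (dP t i) & has_rderiv (x i) t (dx t i)].
Proof.
move=> tf; case: run => _ _ _ /(_ t tf) [_]; rewrite /rule_rates /dp /db /dx /dP /rule3.
case: ifP => _ [dpt rates]; split=> // i; have := rates i.
all: by case: ifP => _ //=; rewrite ?mul0r ?oppr0 ?andbF ?div1r ?mul1r.
Qed.

Lemma supply_rate t : 0 <= t < f -> has_rderiv S t (- \sum_(j < n) dx t j).
Proof.
move=> tf; rewrite /supply -[X in has_rderiv _ _ X]sub0r.
apply: has_rderivB; first exact: has_rderiv_cst.
apply: has_rderiv_sum => j _.
by case: (run_rates tf) => _ /(_ j) [].
Qed.

Lemma continuous_supply : {within `[0, f], continuous S}.
Proof.
apply: within_continuousB; first by move=> y; exact: cvg_cst.
by apply: within_continuous_sum => j _; case: (run_continuous j).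
Qed.

Lemma in_run s t u : 0 <= s -> s <= u < t -> t <= f -> 0 <= u < f.
Proof. by move=> s0 /andP [su ut] tf; rewrite (le_trans s0 su) (lt_le_trans ut tf). Qed.

Lemma run_rderiv_ge0_le g s t : 0 <= s -> s <= t -> t <= f ->
  {within `[0, f], continuous g} ->
  (forall u, s <= u < t -> exists2 d, 0 <= d & has_rderiv g u d) -> g s <= g t.
Proof. by move=> s0 st tf /(within_continuous_subitv s0 tf); exact: rderiv_ge0_le. Qed.

Lemma run_rderiv0_eq g s t : 0 <= s -> s <= t -> t <= f ->
  {within `[0, f], continuous g} ->
  (forall u, s <= u < t -> has_rderiv g u 0) -> g t = g s.
Proof. by move=> s0 st tf /(within_continuous_subitv s0 tf); exact: rderiv0_eq. Qed.

Lemma budget_ge0 i t : 0 <= t <= f -> 0 <= b i t.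
Proof.
move=> /andP [t0 tf]; have [_ _ b0] := run_init i.
apply: (@rderiv_barrier_ge0 _ (b i) 0 t) => //.
- by case: (run_continuous i) => bc _ _; exact: within_continuous_subitv bc.
- by rewrite b0 ltW.
move=> s st bs; exists 0 => //.
have bs' : (0 < b i s) = false by apply/negbTE; rewrite -leNgt ltW.
have -> : 0 = db s i.
  by rewrite /db /dP /clinching /first_exiting /active /exiting bs' !andbF oppr0.
by case: (run_rates (in_run (lexx 0) st tf)) => _ /(_ i) [].
Qed.

Lemma clinching_price_gt0 t i : cl t i -> 0 < p t.
Proof. by case/and3P. Qed.

Lemma clinching_budgets t i : cl t i -> p t * S t = \sum_(j < n | j != i) b j t.
Proof.
case/and3P => _ pt /eqP ->; rewrite /demand_others /demand mulr_sumr.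
by apply: eq_bigr => j _; rewrite mulrC divfK // gt_eqF.
Qed.

Lemma supply_ge0 t : 0 <= t <= f -> 0 <= S t.
Proof.
move=> /andP [t0 tf]; apply: (@rderiv_barrier_ge0 _ S 0 t) => //.
- exact: within_continuous_subitv continuous_supply.
- by rewrite /supply big1 ?subr0 // => j _; case: (run_init j).
move=> s st Ss; exists 0 => //; have sf := in_run (lexx 0) st tf.
suff <- : - \sum_(j < n) dx s j = 0 by exact: supply_rate.
rewrite big1 ?oppr0 // => j _; rewrite /dx /dP.
case: ifP => [clj|_]; last by rewrite mul0r.
have : 0 <= p s * S s.
  rewrite (clinching_budgets clj) sumr_ge0 // => k _; apply: budget_ge0.
  by case/andP: sf => -> /ltW ->.
by rewrite pmulr_rge0 ?(clinching_price_gt0 clj) // leNgt Ss.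
Qed.

Lemma pay_rate_ge0 t i : 0 <= t <= f -> 0 <= dP t i.
Proof. by move=> tf; rewrite /dP; case: ifP => // _; case: ifP => // _; exact: supply_ge0. Qed.

Lemma budget_rate_le0 t i : 0 <= t <= f -> db t i <= 0.
Proof.
move=> tf; rewrite /db; case: ifP => _; first by rewrite lerN10.
by rewrite oppr_le0 pay_rate_ge0.
Qed.

Lemma price_le s t : 0 <= s -> s <= t -> t <= f -> p s <= p t.
Proof.
move=> s0 st tf; apply: run_rderiv_ge0_le run_continuous_price _ => // u su.
exists (dp u); first by rewrite /dp; case: ifP.
by case: (run_rates (in_run s0 su tf)).
Qed.

Lemma price_ge0 t : 0 <= t -> t <= f -> 0 <= p t.
Proof. by case: run => _ [p0 _] _ _ _ t0 tf; rewrite -p0 price_le. Qed.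

Lemma budget_le i s t : 0 <= s -> s <= t -> t <= f -> b i t <= b i s.
Proof.
move=> s0 st tf; rewrite -lerN2.
apply: (@run_rderiv_ge0_le (fun u => - b i u)) => // [|u su].
  by case: (run_continuous i) => bc _ _ y; exact: continuousN (bc y).
have uf := in_run s0 su tf; exists (- db u i).
  by rewrite oppr_ge0 budget_rate_le0 //; case/andP: uf => -> /ltW ->.
by apply: has_rderivN; case: (run_rates uf) => _ /(_ i) [].
Qed.

Lemma alloc_const i s t : 0 <= s -> s <= t -> t <= f ->
  (forall u, s <= u < t -> ~~ cl u i) -> x i t = x i s.
Proof.
move=> s0 st tf ncl; apply: run_rderiv0_eq => // [|u su].
  by case: (run_continuous i).
have -> : 0 = dx u i by rewrite /dx /dP (negbTE (ncl u su)) mul0r.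
by case: (run_rates (in_run s0 su tf)) => _ /(_ i) [].
Qed.

Lemma pay_const i s t : 0 <= s -> s <= t -> t <= f ->
  (forall u, s <= u < t -> ~~ cl u i) -> P i t = P i s.
Proof.
move=> s0 st tf ncl; apply: run_rderiv0_eq => // [|u su].
  by case: (run_continuous i).
have -> : 0 = dP u i by rewrite /dP (negbTE (ncl u su)).
by case: (run_rates (in_run s0 su tf)) => _ /(_ i) [].
Qed.

(* Clinching trades budget for payment at the same rate, so only exiting as
   the first member of [E(t)] changes the budget plus payment. *)
Lemma spent_const i t : 0 <= t -> t <= f -> (forall u, 0 <= u < t -> ~~ fe u i) ->
  b i t + P i t = B i.
Proof.
move=> t0 tf nfe; have [_ P0 b0] := run_init i.
rewrite -[B i]addr0 -P0 -b0; apply: (@run_rderiv0_eq (fun u => b i u + P i u)) => // [|u ut].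
  by case: (run_continuous i) => bc _ Pc; exact: within_continuousD.
have -> : 0 = db u i + dP u i by rewrite /db (negbTE (nfe u ut)) !andbF addNr.
by case: (run_rates (in_run (lexx 0) ut tf)) => _ /(_ i) [db_u dP_u _]; exact: has_rderivD.
Qed.

Lemma clinch_rate_le0 u j : 0 <= u <= f -> p u * dx u j + db u j <= 0.
Proof.
move=> uf; rewrite /dx; have [clj|nclj] := boolP (cl u j).
  by rewrite mulrC divfK ?gt_eqF ?(clinching_price_gt0 clj) // /db clj /= addrN.
by rewrite /dP (negbTE nclj) mul0r mulr0 add0r budget_rate_le0.
Qed.

(* [0 <= slack i t] says that the demands of the others fit into the supply;
   [i] clinches when [slack i t = 0]. *)
Let slack i t := p t * S t - \sum_(j < n | j != i) b j t.

Lemma slack_ge0 i s t : 0 <= s -> s <= t -> t <= f -> 0 <= slack i s -> 0 <= slack i t.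
Proof.
move=> s0 st tf slack_s; apply: (@rderiv_barrier_ge0 _ (slack i) s t) => //.
  apply: (within_continuous_subitv s0 tf); apply: within_continuousB.
    exact: within_continuousM run_continuous_price continuous_supply.
  by apply: within_continuous_sum => j _; case: (run_continuous j).
move=> u su slack_u; have uf := in_run s0 su tf.
have uf' : 0 <= u <= f by case/andP: uf => -> /ltW ->.
have ncl : ~~ cl u i.
  by apply/negP => /clinching_budgets e; move: slack_u; rewrite /slack e subrr ltxx.
have [dp_u rates] := run_rates uf.
exists (dp u * S u - \sum_(j < n | j != i) (p u * dx u j + db u j)).
  rewrite subr_ge0 (le_trans (y := 0)) //.
    by rewrite sumr_le0 // => j _; exact: clinch_rate_le0.
  by rewrite mulr_ge0 ?supply_ge0 // /dp; case: ifP.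
have -> : \sum_(j < n | j != i) (p u * dx u j + db u j) =
    p u * \sum_(j < n) dx u j + \sum_(j < n | j != i) db u j.
  have dxi : dx u i = 0 by rewrite /dx /dP (negbTE ncl) mul0r.
  by rewrite big_split /= mulr_sumr [X in _ = X + _](bigD1 i) //= dxi mulr0 add0r.
rewrite opprD addrA -mulrN; apply: has_rderivB.
  by apply: has_rderivM => //; exact: supply_rate.
by apply: has_rderiv_sum => j _; case: (rates j).
Qed.

Lemma alloc_gt0_clinched i t : 0 <= t -> t <= f -> 0 < x i t ->
  exists2 u, 0 <= u < t & cl u i.
Proof.
move=> t0 tf xt; case: (pselect (exists2 u, 0 <= u < t & cl u i)) => // ncl.
suff : x i t = x i 0 by case: (run_init i) => -> _ _ xt0; move: xt; rewrite xt0 ltxx.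
by apply: alloc_const => // u ut; apply/negP => clu; apply: ncl; exists u.
Qed.

Lemma alloc_gt0_slack i t : 0 <= t -> t <= f -> 0 < x i t ->
  0 <= slack i t /\ 0 < p t.
Proof.
move=> t0 tf xt; have [u /andP [u0 ut] clu] := alloc_gt0_clinched t0 tf xt.
split.
  by apply: (slack_ge0 u0 (ltW ut) tf); rewrite /slack (clinching_budgets clu) subrr.
by apply: lt_le_trans (clinching_price_gt0 clu) (price_le u0 (ltW ut) tf).
Qed.

Lemma others_demand_le i t : 0 <= t -> t <= f -> 0 < p t -> 0 <= slack i t ->
  \sum_(j < n | j != i) demand p b t j <= S t.
Proof.
move=> t0 tf pt; rewrite /slack subr_ge0 => le.
by rewrite /demand -mulr_suml ler_pdivrMr // mulrC.
Qed.

(* A bidder who has clinched something stays active: otherwise its slack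
   makes the stopping rule (I) fire. *)
Lemma alloc_gt0_active i t : 0 <= t < f -> 0 < x i t -> act t i.
Proof.
move=> tf xt; have [t0 tf'] := andP tf; apply: contraNT (run_not_stopped tf) => nact.
have [slack_t pt] := alloc_gt0_slack t0 (ltW tf') xt.
rewrite /stop_cond pt /=; apply/orP; right.
apply: le_trans (others_demand_le t0 (ltW tf') pt slack_t).
rewrite [leRHS]big_mkcond [leLHS]big_mkcond /=; apply: ler_sum => j _.
case: ifP => actj; last first.
  by case: ifP => // _; apply: divr_ge0 (ltW pt); apply: budget_ge0; rewrite t0 ltW.
suff -> : j != i by [].
by apply: contraTneq actj => ->.
Qed.

Lemma alloc_gt0_not_exiting i t : 0 <= t < f -> 0 < x i f -> ~~ ex t i.
Proof.
move=> tf xf; have [t0 tf'] := andP tf; apply/negP => /[dup] exi /andP [/eqP vp _].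
have xft : x i f = x i t.
  apply: alloc_const => // [|u /andP [tu uf]]; first exact: ltW.
  apply/negP => /and3P [/andP [pv _] _ _].
  by move: (price_le t0 tu (ltW uf)); rewrite -vp leNgt pv.
have : act t i by apply: alloc_gt0_active; rewrite // -xft.
by rewrite /active vp ltxx.
Qed.

Lemma alloc_gt0_spent i : 0 < x i f -> b i f + P i f = B i.
Proof.
move=> xf; apply: spent_const run_f_ge0 (lexx f) _ => u uf.
by apply/negP => /andP [exi _]; move: (alloc_gt0_not_exiting uf xf); rewrite exi.
Qed.

Lemma active_spent i : act f i -> b i f + P i f = B i.
Proof.
move=> /andP [pv _]; apply: spent_const run_f_ge0 (lexx f) _ => u /andP [u0 uf].
apply/negP => /andP [/andP [/eqP vp _] _].
by move: (price_le u0 (ltW uf) (lexx f)); rewrite -vp leNgt pv.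
Qed.

(* The price crosses [v i] continuously, so a bidder with budget left and
   [v i < p f] would have exited, and then stopped clinching. *)
Lemma alloc_gt0_valuation i : 0 < x i f -> 0 < b i f -> p f <= v i.
Proof.
move=> xf bf; rewrite leNgt; apply/negP => vp.
have [t] : exists2 t, t \in `[0, f]%R & p t = v i.
  apply: IVT run_f_ge0 run_continuous_price _.
  case: run => _ [-> _] _ _ _.
  by rewrite ge_min le_max v_ge0 (ltW vp) orbT.
rewrite in_itv /= => /andP [t0 tf] pt.
have tf' : t < f by rewrite lt_neqAle tf andbT; apply/eqP => e; move: vp; rewrite -pt e ltxx.
have : ex t i by rewrite /exiting pt eqxx (lt_le_trans bf) // budget_le.
by apply/negP; apply: alloc_gt0_not_exiting; rewrite ?t0.
Qed.

Lemma exiting_before j k s : 0 <= s -> s <= f -> ex f j -> ex f k -> v j = p s ->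
  ex s k.
Proof.
move=> s0 sf /andP [/eqP vj _] /andP [/eqP vk bk] vs.
by rewrite /exiting vk -vj vs eqxx (lt_le_trans bk) // budget_le.
Qed.

(* A bidder with [b i f + P i f < B i] had budget drained without payment,
   which only rule (III) does, to the first exiting bidder. *)
Lemma drained_first_exiting i : b i f + P i f < B i -> exists2 t, 0 <= t < f & fe t i.
Proof.
move=> dr; case: (pselect (exists2 t, 0 <= t < f & fe t i)) => // nfe.
suff e : b i f + P i f = B i by move: dr; rewrite e ltxx.
apply: spent_const run_f_ge0 (lexx f) _ => u uf.
by apply/negP => feu; apply: nfe; exists u.
Qed.

Lemma drained_exiting_unique i k : ex f i -> ex f k ->
  b i f + P i f < B i -> b k f + P k f < B k -> i = k.
Proof.
have le_ik i' k' : ex f i' -> ex f k' -> b i' f + P i' f < B i' -> (i' <= k')%N.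
  move=> exi exk /drained_first_exiting [t /andP [t0 tf] /andP [/andP [/eqP vt _] first]].
  by move/forallP/(_ k')/implyP: first; apply; exact: exiting_before t0 (ltW tf) exi exk vt.
by move=> exi exk di dk; apply/val_inj/anti_leq; rewrite le_ik ?le_ik.
Qed.

Lemma drained_exiting_alloc0 j i : ex f j -> ex f i -> b j f + P j f < B j ->
  ~~ (0 < x i f).
Proof.
move=> exj exi /drained_first_exiting [t tf /andP [/andP [/eqP vt _] _]].
apply/negP => xi; have [t0 tf'] := andP tf.
by move: (alloc_gt0_not_exiting tf xi); rewrite (exiting_before t0 (ltW tf') exj exi vt).
Qed.

Lemma not_stopped_budgets t : 0 <= t < f -> 0 < p t ->
  p t * S t < \sum_(j < n | act t j) b j t.
Proof.
move=> tf pt; move: (run_not_stopped tf); rewrite /stop_cond pt negb_or /= => /andP [_].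
by rewrite -ltNge /demand -mulr_suml ltr_pdivlMr // mulrC.
Qed.

(* Rule (I) did not fire just before [f]; by continuity the budgets of the
   bidders with [p f <= v j] then still cover [p f * S f]. *)
Lemma stop_budgets_cover : 0 < p f -> p f * S f <= \sum_(j < n | p f <= v j) b j f.
Proof.
move=> pf; rewrite leNgt; apply/negP => lt_f.
pose phi t := \sum_(j < n | p f <= v j) b j t - p t * S t.
have f_gt0 : 0 < f.
  rewrite lt_neqAle run_f_ge0 andbT; apply/eqP => f0; move: pf.
  by case: run => _ [p0 _] _ _ _; rewrite -f0 p0 ltxx.
have f_in : `[0, f] f by rewrite /= in_itv /= run_f_ge0 lexx.
have p_f : p @ within `[0, f] (nbhs f) --> p f.
  by move/subspace_continuousP: run_continuous_price; apply.
have phi_f : phi @ within `[0, f] (nbhs f) --> phi f.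
  suff /subspace_continuousP : {within `[0, f], continuous phi} by apply.
  apply: within_continuousB.
    by apply: within_continuous_sum => j _; case: (run_continuous j).
  exact: within_continuousM run_continuous_price continuous_supply.
have v_below : \forall y \near within `[0, f] (nbhs f),
    forall j, v j < p f -> v j < p y.
  apply: filter_forall => j; have [vj|_] := ltP (v j) (p f); last exact: nearW.
  by apply: filterS (cvgr_gt (p f) p_f (v j) vj) => y ? _.
have [y yf [py vy phiy]] : exists2 y, 0 <= y < f &
    [/\ 0 < p y, forall j, v j < p f -> v j < p y & phi y < 0].
  apply: near_within_left f_gt0 _; near=> y; split.
  - by near: y; exact: cvgr_gt p_f 0 pf.
  - by near: y; exact: v_below.
  - by near: y; apply: cvgr_lt phi_f 0 _; rewrite /phi subr_lt0.
have : \sum_(j < n | act y j) b j y <= \sum_(j < n | p f <= v j) b j y.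
  rewrite [leRHS]big_mkcond [leLHS]big_mkcond /=; apply: ler_sum => j _.
  case: ifP => [/andP [pvj _]|_]; last first.
    by case: ifP => // _; apply: budget_ge0; case/andP: yf => -> /ltW ->.
  have -> // : p f <= v j.
  by rewrite leNgt; apply/negP => /vy; rewrite ltNge (ltW pvj).
by move: (not_stopped_budgets yf py) phiy; rewrite /phi; lra.
Unshelve. all: by end_near. Qed.

Lemma price0_valuation0 : p f = 0 -> forall i, v i = 0.
Proof.
move=> pf0 i; apply/eqP; rewrite eq_le v_ge0 andbT leNgt; apply/negP => vi.
have p0 u : 0 <= u -> u <= f -> p u = 0.
  by move=> u0 uf; apply/le_anti; rewrite price_ge0 // andbT -pf0 price_le.
have Pf : P i f = 0.
  case: (run_init i) => _ P0 _; rewrite -[RHS]P0.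
  apply: (@pay_const i 0 f) => //; first exact: run_f_ge0.
  move=> u /andP [u0 uf].
  by apply/negP => /clinching_price_gt0; rewrite p0 ?ltxx // ltW.
have bf : b i f = B i.
  rewrite -(@spent_const i f run_f_ge0 (lexx f)) ?Pf ?addr0 // => u /andP [u0 uf].
  by apply/negP => /andP [/andP [/eqP vp _] _]; move: vi; rewrite vp p0 ?ltxx // ltW.
case: run => _ _ _ _; rewrite /stop_cond pf0 ltxx andFb orbF => /forallP /(_ i).
by rewrite /active pf0 vi bf B_gt0.
Qed.

Lemma price0_time0 : p f = 0 -> f = 0.
Proof.
move=> /price0_valuation0 v0; apply/le_anti; rewrite run_f_ge0 andbT leNgt.
apply/negP => f_gt0; move: (@run_not_stopped 0 (ltac:(by rewrite lexx f_gt0))).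
case: run => _ [p0 _] _ _ _; rewrite /stop_cond negb_or => /andP [/forallP []] j.
by rewrite /active p0 v0 ltxx.
Qed.

Local Notation unsat r i := (unsaturated v B p b x P f r i).
Let cc j := demand p b f j.
Let rem := S f - \sum_(j < n | act f j) demand p b f j.

Lemma price_demand j : 0 < p f -> p f * cc j = b j f.
Proof. by move=> pf; rewrite /cc /demand mulrC divfK ?gt_eqF. Qed.

Lemma demand_ge0 j : 0 < p f -> 0 <= cc j.
Proof.
move=> pf; apply: divr_ge0 (ltW pf); apply: budget_ge0.
by rewrite run_f_ge0 lexx.
Qed.

Lemma remainder_ge0 : 0 < p f -> 0 <= rem.
Proof.
move=> pf; case: run => _ _ _ _; rewrite /stop_cond pf /= subr_ge0 => /orP [/forallP nact|//].
by rewrite big_pred0 => [|j]; [apply: supply_ge0; rewrite run_f_ge0 lexx | exact/negbTE].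
Qed.

Lemma remainder_le : 0 < p f -> rem <= \sum_(j < n | ex f j) cc j.
Proof.
move=> pf; rewrite /rem lerBlDl -(ler_pM2l pf) [leRHS]mulrDr !mulr_sumr.
apply: le_trans (stop_budgets_cover pf) _.
rewrite big_mkcond [X in _ <= X + _]big_mkcond [X in _ <= _ + X]big_mkcond -big_split /=.
apply: ler_sum => j _; rewrite !price_demand //.
have bj : 0 <= b j f by apply: budget_ge0; rewrite run_f_ge0 lexx.
case: ifP => [|_]; last by rewrite addr_ge0 //; case: ifP.
rewrite le_eqVlt /active /exiting => /orP [/eqP pv|pv]; rewrite pv ?eqxx ?ltxx //=.
  by rewrite add0r; case: ifP => // /negbT; rewrite -leNgt.
by rewrite (gt_eqF pv) addr0; case: ifP => // /negbT; rewrite -leNgt.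
Qed.

Lemma exiting_nactive t j : ex t j -> ~~ act t j.
Proof. by case/andP => /eqP vp _; rewrite /active vp ltxx. Qed.

Lemma exiting_others_le_remainder i : ex f i -> 0 < x i f ->
  \sum_(j < n | ex f j && (j != i)) cc j <= rem.
Proof.
move=> exi xi; have [slack_f pf] := alloc_gt0_slack run_f_ge0 (lexx f) xi.
rewrite /rem lerBrDl; apply: le_trans (others_demand_le run_f_ge0 (lexx f) pf slack_f).
rewrite big_mkcond [X in X + _ <= _]big_mkcond [X in _ + X <= _]big_mkcond -big_split.
rewrite [leRHS]big_mkcond; apply: ler_sum => j _ /=.
rewrite /cc; have [actj|_] := boolP (act f j).
  have ji : j != i by apply: contraTneq actj => ->; exact: exiting_nactive.
  by rewrite ji (contraTF (@exiting_nactive f j) actj) addr0.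
rewrite add0r; case: ifP => [/andP [_ ->] //|_].
by case: ifP => // _; exact: demand_ge0.
Qed.

Lemma filling_final_split r : 0 < p f -> filling cc (ex f) r rem ->
  final_split v p b x f r.
Proof.
move=> pf [r_bd r_out r_sum]; split=> // [j|j].
  by case/andP: (r_bd j).
by rewrite -(price_demand j pf) ler_pM2l //; case/andP: (r_bd j).
Qed.

Lemma unsaturated_exiting r j : 0 < p f -> final_split v p b x f r -> unsat r j ->
  ex f j.
Proof.
move=> pf [_ r_out _ _]; have [//|nexj] := boolP (ex f j).
rewrite /unsaturated /final_alloc /final_pay (r_out j nexj) !addr0.
have [actj|nactj] := boolP (act f j).
  by rewrite -/(cc j) price_demand // (addrC (P j f)) active_spent // ltxx => -[].
rewrite mulr0 !addr0 => -[xj]; rewrite -(alloc_gt0_spent xj).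
have [bj|bj] := ltP 0 (b j f); last by rewrite -subr_gt0 addrK ltNge bj.
move: (alloc_gt0_valuation xj bj); rewrite le_eqVlt => /orP [/eqP pv|pv].
  by move: nexj; rewrite /exiting pv eqxx bj.
by move: nactj; rewrite /active pv bj.
Qed.

Lemma unsaturated_full r j : 0 < p f -> ex f j -> r j = cc j -> unsat r j ->
  b j f + P j f < B j.
Proof.
move=> pf exj rj [_]; rewrite /final_pay (negbTE (exiting_nactive exj)) add0r rj.
by rewrite price_demand // addrC.
Qed.

Lemma unsaturated_empty r j : ex f j -> r j = 0 -> unsat r j -> 0 < x j f.
Proof.
move=> exj rj [].
by rewrite /final_alloc (negbTE (exiting_nactive exj)) rj !addr0.
Qed.

(* The bidder [d] who may stay unsaturated: an exiting bidder holding an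
   allocation, else the drained exiting bidder, else anybody. *)
Lemma exists_residual_bidder : (0 < n)%N -> exists d : 'I_n,
  (forall j, ex f j -> b j f + P j f < B j -> j = d) /\
  ((exists2 j, ex f j & 0 < x j f) -> \sum_(j < n | ex f j && (j != d)) cc j <= rem).
Proof.
move=> n0; case: (pselect (exists2 i, ex f i & 0 < x i f)) => [[i exi xi]|noalloc].
  exists i; split=> [j exj dj|_]; last exact: exiting_others_le_remainder.
  by move: (drained_exiting_alloc0 exj exi dj); rewrite xi.
case: (pselect (exists2 d, ex f d & b d f + P d f < B d)) => [[d exd dd]|nodrained].
  exists d; split=> [j exj dj|/noalloc //].
  exact: drained_exiting_unique exj exd dj dd.
by exists (Ordinal n0); split=> [j exj dj|/noalloc //]; exfalso; apply: nodrained; exists j.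
Qed.

Lemma unsaturated_unique_price_gt0 : (0 < n)%N -> 0 < p f -> exists r,
  final_split v p b x f r /\ forall i j, unsat r i -> unsat r j -> i = j.
Proof.
move=> n0 pf; have [d [drained_d alloc_d]] := exists_residual_bidder n0.
have cc_ge0 j : 0 <= cc j by exact: demand_ge0.
have rem_le := remainder_le pf.
have [le_rem|lt_rem] := leP (\sum_(j < n | ex f j && (j != d)) cc j) rem.
  have [r rfill r_full] :=
    @filling_all_but _ _ _ cc_ge0 (ex f) d rem (ltac:(by rewrite le_rem rem_le)).
  exists r; split; first exact: filling_final_split.
  suff only_d j : unsat r j -> j = d by move=> i j /only_d -> /only_d ->.
  move=> uj; have exj := unsaturated_exiting pf (filling_final_split pf rfill) uj.
  have [//|jd] := eqVneq j d.
  exact: drained_d exj (unsaturated_full pf exj (r_full j exj jd) uj).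
have [r rfill r_part] := @filling_greedy _ _ _ cc_ge0 [pred j | ex f j && (j != d)] rem
  (ltac:(by rewrite remainder_ge0 // ltW)).
have [r_bd r_out _] := rfill.
have rfill' : filling cc (ex f) r rem by apply: filling_sub rfill => j /andP [].
exists r; split; first exact: filling_final_split.
suff part j : unsat r j -> 0 < r j < cc j by move=> i j /part ? /part ?; exact: r_part.
move=> uj; have exj := unsaturated_exiting pf (filling_final_split pf rfill') uj.
have rj0 : r j != 0.
  apply/eqP => rj; move: lt_rem; rewrite ltNge alloc_d //.
  by exists j => //; exact: unsaturated_empty exj rj uj.
have jd : j != d by apply: contra_neq rj0 => ->; apply: r_out; rewrite /= eqxx andbF.
have rjc : r j != cc j.
  by apply: contra_neq jd => rj; exact: drained_d exj (unsaturated_full pf exj rj uj).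
by case/andP: (r_bd j) => r0 rc; rewrite !lt_neqAle eq_sym rj0 r0 rjc rc.
Qed.

(* At price [0] everybody exits at once; any single bidder may take the good. *)
Lemma unsaturated_unique_price0 : (0 < n)%N -> p f = 0 -> exists r,
  final_split v p b x f r /\ forall i j, unsat r i -> unsat r j -> i = j.
Proof.
move=> n0 pf0; have v0 := price0_valuation0 pf0.
have p0 : p 0 = 0 by case: run => _ [].
have nact j : act 0 j = false by rewrite /active p0 v0 ltxx.
pose i0 : 'I_n := Ordinal n0.
exists (fun j => if j == i0 then 1 else 0); rewrite (price0_time0 pf0); split.
  split=> [j|j|j|]; first by case: ifP.
  - by rewrite /exiting v0 p0 eqxx; case: (run_init j) => _ _ ->; rewrite B_gt0.
  - by rewrite p0 mul0r; case: (run_init j) => _ _ ->; exact: ltW.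
  rewrite [X in _ - X]big_pred0 => [|j]; last exact: nact.
  rewrite subr0 /supply [X in _ - X]big1 => [|j _]; last by have [-> _ _] := run_init j.
  by rewrite subr0 -big_mkcond big_pred1_eq.
suff only_i0 j : unsaturated v B p b x P 0 (fun j => if j == i0 then 1 else 0) j -> j = i0.
  by move=> i j /only_i0 -> /only_i0 ->.
rewrite /unsaturated /final_alloc nact; case: (run_init j) => -> _ _.
by rewrite !add0r; case: eqP => // _; rewrite ltxx => -[].
Qed.

End AuctionRun.

Theorem lemma5 (R : realType) (n : nat) (v B : 'I_n -> R)
  (p : R -> R) (b x P : 'I_n -> R -> R) (f : R) :
  (0 < n)%N ->
  (forall i, 0 <= v i) ->
  (forall i, 0 < B i) ->
  auction_run v B p b x P f ->
  exists r : 'I_n -> R,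
    final_split v p b x f r /\
    (forall i j : 'I_n,
      0 < final_alloc v p b x f r i -> final_pay v p b P f r i < B i ->
      0 < final_alloc v p b x f r j -> final_pay v p b P f r j < B j ->
      i = j).
Proof.
move=> n0 v_ge0 B_gt0 run.
have pf_ge0 : 0 <= p f := price_ge0 run (run_f_ge0 run) (lexx f).
have [r [split_r unique_r]] : exists r, final_split v p b x f r /\
    forall i j, unsaturated v B p b x P f r i -> unsaturated v B p b x P f r j -> i = j.
  have [pf0|pf_neq0] := eqVneq (p f) 0.
    exact: unsaturated_unique_price0 v_ge0 B_gt0 run n0 pf0.
  apply: unsaturated_unique_price_gt0 v_ge0 B_gt0 run n0 _.
  by rewrite lt_neqAle eq_sym pf_neq0.
by exists r; split=> // i j Xi Pi Xj Pj; exact: unique_r.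
Qed.
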